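(* Let $A$ be a nonempty finite set of $n$ alternatives and let $C$ be a choice rule on $A$ that is (capacity-constrained) lexicographic for a priority profile $(\succ_1,\dots,\succ_n)$. Let $A_1=A$ and, for $t\in\{2,\dots,n\}$, $A_t=A\setminus C(A,t-1)$. Then $C$ is lexicographic for another priority profile $(\succ'_1,\dots,\succ'_n)$ if and only if $\succ_1=\succ'_1$ and, for each $t\in\{1,\dots,n\}$, the restrictions of $\succ_t$ and $\succ'_t$ to $A_t$ coincide.
   Context: Let $\mathcal{A}$ be the set of all nonempty subsets of $A$. A choice rule is a map $C$ assigning to each $(S,q)\in\mathcal{A}\times\{1,\dots,n\}$ a nonempty set $C(S,q)\subseteq S$ with $|C(S,q)|\le q$. A priority ordering is a complete, transitive and antisymmetric binary relation on $A$; a priority profile is a list $(\succ_1,\dots,\succ_n)$ of $n$ priority orderings. $C$ is (capacity-constrained) lexicographic for $(\succ_1,\dots,\succ_n)$ if for every $(S,q)$, $C(S,q)$ is obtained by choosing the $\succ_1$-highest alternative in $S$, then the $\succ_2$-highest alternative among the remaining ones, and so on, until $q$ alternatives are chosen or no alternative is left. *)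

From mathcomp Require Import all_boot.
Set Implicit Arguments. Unset Strict Implicit. Unset Printing Implicit Defensive.

(* A priority ordering on A: complete, transitive, antisymmetric relation
   (r x y reads "x ≻ y or x = y"; completeness makes it reflexive). *)
Definition priority (A : finType) (r : rel A) : Prop :=
  [/\ (forall x y, r x y || r y x),
      (forall x y z, r x y -> r y z -> r x z) &
      (forall x y, r x y -> r y x -> x = y)].

(* A priority profile (≻_1,...,≻_n), n = #|A|; ≻_t is p (t-1). *)
Definition priority_profile (A : finType) (p : 'I_#|A| -> rel A) : Prop :=
  forall i, priority (p i).

(* Choice rule: for nonempty S and 1 <= q <= n, C S q is a nonempty subset
   of S with at most q elements (values outside this domain are irrelevant). *)
Definition choice_rule (A : finType) (C : {set A} -> nat -> {set A}) : Prop :=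
  forall (S : {set A}) (q : nat), S != set0 -> 0 < q <= #|A| ->
    [/\ C S q \subset S, C S q != set0 & #|C S q| <= q].

Definition prof_at (A : finType) (p : 'I_#|A| -> rel A) (k : nat) : rel A :=
  match insub k with Some i => p i | None => fun _ _ => true end.

Fixpoint lex_choice (A : finType) (p : 'I_#|A| -> rel A) (S : {set A})
    (k : nat) : {set A} :=
  match k with
  | 0 => set0
  | k'.+1 =>
      let X := lex_choice p S k' in
      match [pick x in S :\: X | [forall y in S :\: X, prof_at p k' x y]] with
      | Some x => x |: X
      | None => X
      end
  end.

Definition lexicographic (A : finType) (C : {set A} -> nat -> {set A})
    (p : 'I_#|A| -> rel A) : Prop :=
  forall (S : {set A}) (q : nat), S != set0 -> 0 < q <= #|A| ->
    C S q = lex_choice p S q.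

(* A_t for t = i+1: A_1 = A, A_t = A \ C(A, t-1). *)
Definition A_t (A : finType) (C : {set A} -> nat -> {set A}) (i : 'I_#|A|)
    : {set A} :=
  if val i == 0 then setT else setT :\: C setT i.

(* The lexicographic procedure at step t only ever compares alternatives that
   are still unchosen, and on a subset S of A these are always among the
   alternatives A_t still unchosen on A itself. Hence two profiles that agree
   on each A_t (with A_1 = A, so ≻_1 = ≻'_1) make the same choices everywhere.
   Conversely, if x, y are in A_t, feed the rule the set C(A, t-1) ∪ {x, y}:
   the first t-1 steps reproduce C(A, t-1), and step t picks the better of x
   and y, so ≻_t and ≻'_t must rank x and y alike. *)

From mathcomp Require Import all_boot.
Set Implicit Arguments. Unset Strict Implicit. Unset Printing Implicit Defensive.

Section Priority.
Variables (A : finType) (r : rel A).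
Hypothesis hr : priority r.

Lemma priority_refl : reflexive r.
Proof. by case: hr => total _ _ x; have := total x x; rewrite orbb. Qed.

Lemma priority_max (R : {set A}) : R != set0 ->
  exists2 m, m \in R & forall y, y \in R -> r m y.
Proof.
case: hr => total trans _ /set0Pn [x xR].
have sorted_R := sort_sorted total (enum R).
case def_s: (sort r (enum R)) sorted_R => [|m s] sorted_ms.
  by have := mem_sort r (enum R) x; rewrite def_s mem_enum xR.
have memR y : (y \in m :: s) = (y \in R) by rewrite -def_s mem_sort mem_enum.
exists m; first by rewrite -memR mem_head.
move=> y; rewrite -memR inE => /predU1P [-> | ys]; first exact: priority_refl.
have r_trans : transitive r by move=> ? ? ?; apply: trans.
by have /allP := order_path_min r_trans sorted_ms; apply.
Qed.

End Priority.

Section LexChoice.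
Variable A : finType.
Implicit Types (p : 'I_#|A| -> rel A) (S T : {set A}).

Definition lex_remaining p S k := S :\: lex_choice p S k.

Lemma prof_atE p k (hk : k < #|A|) : prof_at p k = p (Ordinal hk).
Proof. by rewrite /prof_at insubT. Qed.

Lemma prof_at_ord p (i : 'I_#|A|) : prof_at p i = p i.
Proof. by rewrite /prof_at valK. Qed.

Lemma priority_prof_at p k : priority_profile p -> k < #|A| ->
  priority (prof_at p k).
Proof. by move=> hp hk; rewrite (prof_atE _ hk). Qed.

Lemma lex_choice_subS p S k : lex_choice p S k \subset lex_choice p S k.+1.
Proof. by rewrite /=; case: pickP => // x _; apply: subsetUr. Qed.

Lemma lex_choiceS_max p S k m : priority (prof_at p k) ->
  m \in lex_remaining p S k ->
  (forall y, y \in lex_remaining p S k -> prof_at p k m y) ->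
  lex_choice p S k.+1 = m |: lex_choice p S k.
Proof.
rewrite /lex_remaining => -[_ _ anti] mR m_max /=.
case: pickP => [z /andP [zR /forall_inP z_max] | no_max].
  by rewrite (anti z m (z_max m mR) (m_max z zR)).
by have := no_max m; rewrite mR; move/forall_inP: m_max => ->.
Qed.

Lemma lex_choiceS_exhausted p S k : lex_remaining p S k = set0 ->
  lex_choice p S k.+1 = lex_choice p S k.
Proof. by rewrite /lex_remaining /= => ->; case: pickP => // x; rewrite inE. Qed.

Lemma lex_choiceS_pair p (i : 'I_#|A|) S x y : priority (p i) ->
  lex_remaining p S i = [set x; y] ->
  lex_choice p S i.+1 = (if p i x y then x else y) |: lex_choice p S i.
Proof.
move=> hpi remS; have [total _ _] := hpi.
apply: lex_choiceS_max; rewrite ?prof_at_ord ?remS //.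
  by case: ifP; rewrite !inE eqxx ?orbT.
have r_yx : ~~ p i x y -> p i y x by have := total x y; case: (p i x y).
have r_refl := priority_refl hpi.
by move=> z; rewrite !inE => /orP [] /eqP ->; case: ifP => // /negbT /r_yx.
Qed.

Lemma lex_remainingS_sub p S k :
  lex_remaining p S k.+1 \subset lex_remaining p S k.
Proof. exact/setDS/lex_choice_subS. Qed.

Lemma lex_remaining_sub p S T k : priority_profile p -> k <= #|A| ->
  S \subset T -> lex_remaining p S k \subset lex_remaining p T k.
Proof.
move=> hp + sST; elim: k => [|k IH] hk; first by rewrite /lex_remaining /= !setD0.
have {}IH := IH (ltnW hk); have hr := priority_prof_at hp hk.
have remS_sub := subset_trans (lex_remainingS_sub p S k) IH.
have [T0 | /(priority_max hr) [m mT m_max]] := eqVneq (lex_remaining p T k) set0.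
  by rewrite {2}/lex_remaining lex_choiceS_exhausted.
have LT := lex_choiceS_max hr mT m_max.
apply/subsetP => z zS; have zT := subsetP remS_sub z zS.
case: (eqVneq z m) zS => [-> mS1 | znm _]; last first.
  by move: zT; rewrite /lex_remaining LT !inE (negbTE znm).
have mS := subsetP (lex_remainingS_sub p S k) m mS1.
have m_maxS y : y \in lex_remaining p S k -> prof_at p k m y.
  by move=> yS; apply/m_max/(subsetP IH).
by move: mS1; rewrite /lex_remaining (lex_choiceS_max hr mS m_maxS) !inE eqxx.
Qed.

Lemma lex_choice_restrict p S T k : priority_profile p -> k <= #|A| ->
  lex_choice p T k \subset S -> S \subset T ->
  lex_choice p S k = lex_choice p T k.
Proof.
move=> hp + + sST; elim: k => [//|k IH] hk LTS.
have hr := priority_prof_at hp hk.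
have {}IH := IH (ltnW hk) (subset_trans (lex_choice_subS p T k) LTS).
have remST := lex_remaining_sub hp (ltnW hk) sST.
have [T0 | /(priority_max hr) [m mT m_max]] := eqVneq (lex_remaining p T k) set0.
  have S0 : lex_remaining p S k = set0 by apply/eqP; rewrite -subset0 -T0.
  by rewrite !lex_choiceS_exhausted.
have LT := lex_choiceS_max hr mT m_max.
rewrite LT -IH; apply: lex_choiceS_max => // [|y /(subsetP remST)/m_max //].
move: mT; rewrite /lex_remaining IH !inE => /andP [-> _].
by apply: (subsetP LTS); rewrite LT setU11.
Qed.

Lemma eq_lex_choice p p' S T k : priority_profile p -> k <= #|A| ->
  S \subset T ->
  (forall i : 'I_#|A|, i < k -> {in lex_remaining p T i &, p i =2 p' i}) ->
  lex_choice p S k = lex_choice p' S k.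
Proof.
move=> hp + sST; elim: k => [//|k IH] hk agree.
have {}IH : lex_choice p S k = lex_choice p' S k.
  by apply: IH (ltnW hk) _ => i ik; apply/agree/ltnW.
have remST := lex_remaining_sub hp (ltnW hk) sST.
rewrite /= -IH.
suff -> : [pick x in S :\: lex_choice p S k |
             [forall y in S :\: lex_choice p S k, prof_at p k x y]] =
          [pick x in S :\: lex_choice p S k |
             [forall y in S :\: lex_choice p S k, prof_at p' k x y]] by [].
apply: eq_pick => x /=; apply: andb_id2l => xS; apply: eq_forallb_in => y yS.
by rewrite !(prof_atE _ hk); apply: agree; rewrite ?ltnSn ?(subsetP remST).
Qed.

Lemma lex_choice_profiles_agree p p' :
  priority_profile p -> priority_profile p' ->
  (forall S q, S != set0 -> 0 < q <= #|A| ->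
     lex_choice p S q = lex_choice p' S q) ->
  forall i : 'I_#|A|, {in lex_remaining p setT i &, p i =2 p' i}.
Proof.
move=> hp hp' same i x y; rewrite !inE !andbT => xX yX.
have [<- | nxy] := eqVneq x y.
  by rewrite (priority_refl (hp i)) (priority_refl (hp' i)).
set X := lex_choice p setT i in xX yX; set S := X :|: [set x; y].
have S0 : S != set0 by apply/set0Pn; exists x; rewrite !inE eqxx orbT.
have LS : lex_choice p S i = X.
  exact: lex_choice_restrict hp (ltnW (ltn_ord i)) (subsetUl _ _) (subsetT _).
have LS' : lex_choice p' S i = X.
  case: (posnP i) => [i0 | i_gt0]; first by rewrite /X i0.
  by rewrite -same // i_gt0 ltnW.
have remS r : lex_choice r S i = X -> lex_remaining r S i = [set x; y].
  move=> LrS; rewrite /lex_remaining LrS setDUl setDv set0U; apply/setDidPl.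
  by rewrite disjoints_subset subUset !sub1set !inE xX yX.
have := same S i.+1 S0 (ltn_ord i).
rewrite (lex_choiceS_pair (hp i) (remS _ LS)) LS.
rewrite (lex_choiceS_pair (hp' i) (remS _ LS')) LS'.
case: (p i x y); case: (p' i x y) => // /setP /(_ x);
  by rewrite !inE eqxx (negbTE nxy) (negbTE xX).
Qed.

End LexChoice.

Lemma A_tE (A : finType) (C : {set A} -> nat -> {set A}) p (i : 'I_#|A|) :
  lexicographic C p -> A_t C i = lex_remaining p setT i.
Proof.
move=> hlex; rewrite /A_t /lex_remaining; case: posnP => [-> | i_gt0] /=.
  by rewrite setD0.
have i_le := ltnW (ltn_ord i).
by rewrite hlex ?i_gt0 // -card_gt0 cardsT (leq_trans i_gt0 i_le).
Qed.

Theorem proposition1 (A : finType) (hA : 0 < #|A|)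
    (C : {set A} -> nat -> {set A}) (p : 'I_#|A| -> rel A) :
  choice_rule C -> priority_profile p -> lexicographic C p ->
  forall p' : 'I_#|A| -> rel A, priority_profile p' ->
    (lexicographic C p' <->
      ((forall i : 'I_#|A|, val i = 0 -> forall x y, p i x y = p' i x y) /\
       (forall i : 'I_#|A|, forall x y, x \in A_t C i -> y \in A_t C i ->
          p i x y = p' i x y))).
Proof.
move=> _ hp hlex p' hp'; split => [hlex' | [_ agree] S q S0 /andP [q_gt0 qA]].
  have same S q : S != set0 -> 0 < q <= #|A| ->
      lex_choice p S q = lex_choice p' S q.
    by move=> S0 hq; rewrite -hlex // -hlex'.
  have agree i x y : x \in A_t C i -> y \in A_t C i -> p i x y = p' i x y.
    by rewrite !(A_tE i hlex); apply: lex_choice_profiles_agree.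
  by split=> // i i0 x y; apply: agree; rewrite /A_t i0 inE.
rewrite hlex ?q_gt0 //; apply: eq_lex_choice hp qA (subsetT S) _.
by move=> i _ x y; rewrite -!(A_tE i hlex); apply: agree.
Qed.
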